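(* Consider the boundary-driven constrained lattice gas on the two-dimensional cylinder $\Lambda = [1,L]\times \mathbb{Z}/L\mathbb{Z}$, with boundary $\partial \Lambda = \{1,L\}\times \mathbb{Z}/L\mathbb{Z}$. Set the left reservoir to $\alpha_\ell$ and the right reservoir to $\alpha_r$, i.e. $\alpha(i)=\alpha_\ell$ if $i\in\{1\}\times\mathbb{Z}/L\mathbb{Z}$ and $\alpha(i)=\alpha_r$ if $i\in\{L\}\times\mathbb{Z}/L\mathbb{Z}$. Then, for every $(i_1,i_2)\in\Lambda$, \[ \rho_a(i_1,i_2) = \alpha_\ell + (\alpha_r-\alpha_\ell)\frac{i_1}{L+1}. \]
   Context: Configurations are $\eta\in\{0,1\}^{\Lambda}$, with $\eta_i=1$ meaning site $i$ is occupied. A particle at $i$ is active if at least one neighbouring site is occupied; set $A_i=\eta_i\,\mathbf 1_{\{\sum_{j'\sim i}\eta_{j'}>0\}}$, where sites outside $\Lambda$ are treated as always occupied ($\eta\equiv1$ on $\Lambda^c$), so boundary particles are always active. The dynamics has generator $\mathscr L=\mathscr L_{bulk}+\mathscr L_{boundary}$ with $\mathscr L_{bulk}f(\eta)=\sum_{i\in\Lambda}\sum_{j\in\Lambda,\,j\sim i}A_i(1-\eta_j)\{f(\eta^{i,j})-f(\eta)\}$ ($\eta^{i,j}$: the particle at $i$ jumps to $j$), and $\mathscr L_{boundary}f(\eta)=\sum_{i\in\partial\Lambda}\big(\alpha(i)f(\eta^{i\leftarrow1})+(1-\alpha(i))f(\eta^{i\leftarrow0})-f(\eta)\big)$ (resampling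 the occupation of boundary site $i$ as a Bernoulli($\alpha(i)$) variable), where $\alpha:\partial\Lambda\to(0,1)$. Let $\pi_\alpha$ be the unique stationary measure and $\rho_a(i)=\mathbb E_{\pi_\alpha}[A_i]$ for $i\in\Lambda$. The paper's theorem shows that $\rho_a$ is discrete-harmonic in $\Lambda$, i.e. $\sum_{j\sim i}(\rho_a(j)-\rho_a(i))=0$ for all $i\in\Lambda$ (sum over neighbours $j$ in $\Lambda$ and in the mirror boundary $\{i\in\mathbb Z^d: d(i,\Lambda)=1\}$), with Dirichlet data $\rho_a(i^* )=\alpha(i)$ at the mirror site $i^*$ adjacent to boundary site $i$; the corollary follows by solving this Dirichlet problem on the cylinder (mirror sites at $i_1=0$ and $i_1=L+1$). *)

From HB Require Import structures.
From mathcomp Require Import all_boot all_order all_algebra.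
Set Implicit Arguments. Unset Strict Implicit. Unset Printing Implicit Defensive.
Import Order.TTheory GRing.Theory Num.Theory.
Local Open Scope ring_scope.

(* Cylinder Lambda = [1,L] x Z/LZ.  A site is a pair (a, b) : 'I_L * 'I_L
   representing (i1, i2) = (a + 1, b mod L). *)
Definition site (L : nat) := ('I_L * 'I_L)%type.

(* configurations eta in {0,1}^Lambda (true = occupied) *)
Definition config (L : nat) := {ffun site L -> bool}.

Definition adj (L : nat) (i j : site L) : bool :=
  ((val i.2 == val j.2) && (((val i.1).+1 == val j.1) || ((val j.1).+1 == val i.1)))
  || [&& val i.1 == val j.1, i.2 != j.2 &
        (((val i.2).+1 %% L)%N == val j.2) || (((val j.2).+1 %% L)%N == val i.2)].

Definition bnd (L : nat) (i : site L) : bool :=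
  (val i.1 == 0)%N || (val i.1 == L.-1)%N.

(* A_i : particle at i is active if some neighbour is occupied, sites outside
   Lambda being always occupied (a site has an outside neighbour iff it is a
   boundary site). *)
Definition active (L : nat) (eta : config L) (i : site L) : bool :=
  eta i && (bnd i || [exists j, adj i j && eta j]).

Definition swapc (L : nat) (eta : config L) (i j : site L) : config L :=
  [ffun k => if k == i then eta j else if k == j then eta i else eta k].

Definition setc (L : nat) (eta : config L) (i : site L) (b : bool) : config L :=
  [ffun k => if k == i then b else eta k].

Definition b2R {R : numDomainType} (b : bool) : R := (b : nat)%:R.

Definition generator {R : numDomainType} (L : nat) (alpha : site L -> R)
    (f : config L -> R) (eta : config L) : R :=
  \sum_(i : site L) \sum_(j : site L | adj i j)
      b2R (active eta i) * b2R (~~ eta j) * (f (swapc eta i j) - f eta)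
  + \sum_(i : site L | bnd i)
      (alpha i * f (setc eta i true) + (1 - alpha i) * f (setc eta i false) - f eta).

Definition stationary {R : numDomainType} (L : nat) (alpha : site L -> R)
    (pi : config L -> R) : Prop :=
  (forall eta, 0 <= pi eta) /\ (\sum_(eta : config L) pi eta = 1) /\
  (forall f : config L -> R, \sum_(eta : config L) pi eta * generator alpha f eta = 0).

Definition rho_a {R : numDomainType} (L : nat) (pi : config L -> R) (i : site L) : R :=
  \sum_(eta : config L) pi eta * b2R (active eta i).

Definition alpha_cyl {R : numDomainType} (L : nat) (al ar : R) (i : site L) : R :=
  if (val i.1 == 0)%N then al else ar.

(* Taking [f eta = eta k] in the stationarity identity, the bulk part of the
   generator only involves the net jump rate across the bonds at [k], and by
   the gradient condition this rate across [j ~ k] is [A_j - A_k].  Hence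
   [rho_a] is discrete-harmonic, a boundary site [k] seeing the reservoir
   value [alpha k] at its mirror site.  The profile affine in the first
   coordinate solves the same Dirichlet problem, and the solution is unique
   by the maximum principle: a positive maximum of the difference of two
   solutions spreads to all neighbours, hence reaches the column [i1 = 1],
   where the mirror term forbids it. *)

From HB Require Import structures.
From mathcomp Require Import all_boot all_order all_algebra.
From mathcomp Require Import zify ring.
Set Implicit Arguments. Unset Strict Implicit. Unset Printing Implicit Defensive.
Import Order.TTheory GRing.Theory Num.Theory.
Local Open Scope ring_scope.

Section Cylinder.
Variables (R : realFieldType) (L : nat).
Implicit Types (i j k : site L) (eta : config L) (g : site L -> R).

Lemma b2RT : b2R true = 1 :> R. Proof. by []. Qed.
Lemma b2RF : b2R false = 0 :> R. Proof. by []. Qed.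

Lemma adjC i j : adj i j = adj j i.
Proof.
rewrite /adj (eq_sym (val i.2)) (eq_sym (val i.1)) (eq_sym i.2).
by rewrite (orbC ((val i.1).+1 == _)) (orbC (((val i.2).+1 %% L)%N == _)).
Qed.

Lemma adj_neq i j : adj i j -> i != j.
Proof.
apply: contraTneq => ->; rewrite /adj !eqxx /= orbb.
by apply/negP => /eqP; lia.
Qed.

Lemma active_occupied eta i : active eta i -> eta i.
Proof. by case/andP. Qed.

Lemma active_occupied_nbr eta i j : adj i j -> eta j -> active eta i = eta i.
Proof.
move=> hij ej; rewrite /active; case: (eta i) => //=.
by apply/orP; right; apply/existsP; exists j; rewrite hij ej.
Qed.

Lemma active_flux eta j k : adj k j ->
  b2R (active eta j) * b2R (~~ eta k) - b2R (active eta k) * b2R (~~ eta j)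
  = b2R (active eta j) - b2R (active eta k) :> R.
Proof.
move=> hkj; have hjk : adj j k by rewrite adjC.
case ej: (eta j); case ek: (eta k).
- by rewrite !(active_occupied_nbr hjk) ?(active_occupied_nbr hkj) ?ej ?ek
     ?b2RT ?b2RF; ring.
- by rewrite /active ek /= b2RT b2RF; ring.
- by rewrite /active ej /= b2RT b2RF; ring.
- by rewrite /active ej ek /= b2RF; ring.
Qed.

Lemma jump_occupation eta i j k : adj i j ->
  b2R (active eta i) * b2R (~~ eta j) * (b2R (swapc eta i j k) - b2R (eta k))
  = b2R (active eta i) * b2R (~~ eta j) * (b2R (j == k) - b2R (i == k)) :> R.
Proof.
move=> hij; have nij := adj_neq hij.
case ai: (active eta i); last by rewrite b2RF !mul0r.
case ej: (eta j); first by rewrite b2RF mulr0 !mul0r.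
have ei := active_occupied ai.
rewrite /swapc ffunE; congr (_ * _).
case: (eqVneq k i) => [->|ki]; first by rewrite eq_sym (negbTE nij) ej ei.
case: (eqVneq k j) => [->|kj]; first by rewrite ei ej.
by rewrite !subrr.
Qed.

Lemma sum_adj_transfer (r : site L -> site L -> R) k :
  \sum_i \sum_(j | adj i j) r i j * (b2R (j == k) - b2R (i == k))
  = \sum_(j | adj k j) (r j k - r k j).
Proof.
under eq_bigr do under eq_bigr do rewrite mulrBr.
under eq_bigr do rewrite sumrB.
rewrite sumrB sumrB; congr (_ - _).
- under [RHS]eq_bigl do rewrite adjC.
  rewrite [RHS]big_mkcond; apply: eq_bigr => i _.
  rewrite big_mkcond (bigD1 k) //= eqxx b2RT mulr1 big1 ?addr0 // => j /negbTE jk.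
  by rewrite jk b2RF mulr0 if_same.
- rewrite (bigD1 k) //= [X in _ + X]big1 ?addr0; last first.
    by move=> i /negbTE ik; apply: big1 => j _; rewrite ik b2RF mulr0.
  by apply: eq_bigr => j _; rewrite eqxx b2RT mulr1.
Qed.

Lemma generator_occupation (alpha : site L -> R) k eta :
  generator alpha (fun e => b2R (e k)) eta =
  \sum_(j | adj k j) (b2R (active eta j) - b2R (active eta k))
  + b2R (bnd k) * (alpha k - b2R (active eta k)).
Proof.
rewrite /generator; congr (_ + _).
  under eq_bigr do under eq_bigr => j hij do rewrite jump_occupation //.
  by rewrite sum_adj_transfer; apply: eq_bigr => j hkj; rewrite active_flux.
rewrite big_mkcond (bigD1 k) //= [X in _ + X]big1 ?addr0; last first.
  by move=> i /negbTE ik; rewrite /setc !ffunE eq_sym ik; case: (bnd i) => //; ring.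
rewrite /setc !ffunE eqxx; case: (boolP (bnd k)) => bk.
  by rewrite /active bk andbT b2RT b2RF; ring.
by rewrite b2RF mul0r.
Qed.

Definition laplacian g k := \sum_(j | adj k j) (g j - g k).

(* The boundary term is the edge from [k] to its mirror site [k*], which
   carries the reservoir value [alpha k]. *)
Definition mirror_harmonic (alpha g : site L -> R) :=
  forall k, laplacian g k + b2R (bnd k) * (alpha k - g k) = 0.

Lemma rho_a_mirror_harmonic (alpha : site L -> R) pi :
  stationary alpha pi -> mirror_harmonic alpha (rho_a pi).
Proof.
case=> _ [pi1 pi_inv] k; rewrite -(pi_inv (fun e => b2R (e k))).
under [RHS]eq_bigr do rewrite generator_occupation mulrDr mulr_sumr.
rewrite big_split /=; congr (_ + _).
  rewrite exchange_big /=; apply: eq_bigr => j _.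
  by rewrite /rho_a -sumrB; apply: eq_bigr => eta _; rewrite mulrBr.
under [RHS]eq_bigr do rewrite mulrCA mulrBr.
by rewrite -mulr_sumr sumrB -mulr_suml pi1 mul1r.
Qed.

Section MaximumPrinciple.
Variable g : site L -> R.
Hypothesis g_harmonic : forall k, laplacian g k = b2R (bnd k) * g k.

Lemma positive_max_propagates k : (forall j, g j <= g k) -> 0 < g k ->
  ~~ bnd k /\ forall j, adj k j -> g j = g k.
Proof.
move=> gk_max gk_gt0.
have lap_le0 : laplacian g k <= 0.
  by apply: sumr_le0 => j _; rewrite subr_le0.
split.
  by apply/negP => bk; move: lap_le0; rewrite g_harmonic bk b2RT mul1r leNgt gk_gt0.
have lap0 : laplacian g k = 0.
  apply/eqP; rewrite eq_le lap_le0 g_harmonic.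
  by apply: mulr_ge0; [case: (bnd k) | exact: ltW].
have gaps0 : \sum_(j | adj k j) (g k - g j) = 0.
  by under eq_bigr do rewrite -opprB; rewrite sumrN -/(laplacian g k) lap0 oppr0.
move=> j hkj; apply/eqP; rewrite eq_sym -subr_eq0; apply/eqP.
by apply: (psumr_eq0P _ gaps0) => // i _; rewrite subr_ge0.
Qed.

Lemma laplacian_max_principle k : g k <= 0.
Proof.
have [m _ m_max] := @arg_maxP _ R _ k xpredT g erefl.
rewrite leNgt; apply/negP => gk_gt0.
have gm_gt0 : 0 < g m by apply: lt_le_trans (m_max k isT).
have is_max j : g j = g m -> forall i, g i <= g j.
  by move=> gj i; rewrite gj; exact: m_max.
suff no_max a j : val j.1 = a -> g j = g m -> False by exact: (no_max _ m erefl).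
elim: a j => [|a IH] j j1 gj.
  by case: (positive_max_propagates (is_max j gj)); rewrite gj // /bnd j1.
have a_lt : (a < L)%N by move: (ltn_ord j.1); rewrite j1; apply: ltnW.
apply: (IH (Ordinal a_lt, j.2) erefl); rewrite -gj.
apply: (positive_max_propagates (is_max j gj) _).2; first by rewrite gj.
by rewrite /adj /= eqxx j1 eqxx orbT.
Qed.

End MaximumPrinciple.

Lemma laplacianB (u v : site L -> R) k :
  laplacian (fun i => u i - v i) k = laplacian u k - laplacian v k.
Proof. by rewrite /laplacian -sumrB; apply: eq_bigr => j _; ring. Qed.

Lemma mirror_harmonic_unique (alpha f g : site L -> R) :
  mirror_harmonic alpha f -> mirror_harmonic alpha g -> f =1 g.
Proof.
have diff_le0 u v : mirror_harmonic alpha u -> mirror_harmonic alpha v ->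
    forall k, u k - v k <= 0.
  move=> hu hv; apply: laplacian_max_principle => k.
  rewrite laplacianB; set b := b2R (bnd k).
  transitivity ((laplacian u k + b * (alpha k - u k))
                - (laplacian v k + b * (alpha k - v k)) + b * (u k - v k)).
    by ring.
  by rewrite hu hv subrr add0r.
move=> hf hg k; apply/eqP; rewrite eq_le -subr_le0 diff_le0 //=.
by rewrite -subr_le0 diff_le0.
Qed.

Lemma sum_ord_eq_nat (F : nat -> R) m :
  \sum_(j : 'I_L | (j : nat) == m) F j = b2R (m < L)%N * F m.
Proof.
case: ltnP => [mL|Lm]; last first.
  rewrite b2RF mul0r big_pred0 // => j /=.
  by apply/negbTE; rewrite neq_ltn (leq_trans (ltn_ord j) Lm).
by rewrite b2RT mul1r (big_pred1 (Ordinal mL)).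
Qed.

Lemma laplacian_col (h : nat -> R) k :
  laplacian (fun j => h (val j.1)) k =
  b2R ((val k.1).+1 < L)%N * (h (val k.1).+1 - h (val k.1))
  + b2R (0 < val k.1)%N * (h (val k.1).-1 - h (val k.1)).
Proof.
move: k => [k1 k2] /=.
have nbr_col (j1 : 'I_L) :
    \sum_(j2 : 'I_L) (if adj (k1, k2) (j1, j2) then h j1 - h k1 else 0)
    = (if (j1 : nat) == k1.+1 then h j1 - h k1 else 0)
      + (if (j1 : nat).+1 == k1 then h j1 - h k1 else 0).
  case: (eqVneq (j1 : nat) k1) => [e|ne].
    by rewrite e subrr !if_same addr0 big1 // => j2 _; rewrite if_same.
  have adj_row (j2 : 'I_L) : adj (k1, k2) (j1, j2)
      = (k2 == j2) && ((k1.+1 == j1 :> nat) || ((j1 : nat).+1 == k1)).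
    rewrite /adj /=; case: and3P => [[/eqP e _ _]|_]; last by rewrite orbF.
    by move: ne; rewrite e eqxx.
  under eq_bigr do rewrite adj_row.
  rewrite -big_mkcond big_mkcondr /= (big_pred1 k2) => [|j2]; last by rewrite /= eq_sym.
  rewrite (eq_sym k1.+1).
  by case: eqP => e1; case: eqP => e2 //=; rewrite ?addr0 ?add0r //; lia.
transitivity (\sum_(j1 : 'I_L) \sum_(j2 : 'I_L)
                (if adj (k1, k2) (j1, j2) then h j1 - h k1 else 0)).
  by rewrite /laplacian pair_bigA big_mkcond; apply: eq_bigr => -[].
under eq_bigr do rewrite nbr_col.
rewrite big_split /= -!big_mkcond (sum_ord_eq_nat (fun n => h n - h k1)).
move: (nat_of_ord k1) (ltn_ord k1) => [|a] aL.
  by rewrite big_pred0 // b2RF mul0r !addr0.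
under eq_bigl do rewrite eqSS.
by rewrite (sum_ord_eq_nat (fun n => h n - h a.+1)) (ltnW aL).
Qed.

Definition linear_profile (al ar : R) k : R :=
  al + (ar - al) * ((val k.1).+1)%:R / (L.+1)%:R.

Lemma linear_profile_mirror_harmonic (al ar : R) : (2 <= L)%N ->
  mirror_harmonic (alpha_cyl al ar) (linear_profile al ar).
Proof.
move=> L_ge2 k; rewrite /linear_profile.
pose h (n : nat) := al + (ar - al) * n.+1%:R / (L.+1)%:R.
rewrite (laplacian_col h) /bnd /alpha_cyl -/(h _).
case: k => [[[|a] aL] _] /=.
  by rewrite L_ge2 !b2RT b2RF /h; field; rewrite lt0r_neq0 // ltr_pwDl.
have [a2L | La2] := ltnP a.+2 L.
  rewrite (_ : (a.+1 == L.-1) = false); last by apply/negbTE/eqP; lia.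
  by rewrite !b2RT b2RF /h; field; rewrite lt0r_neq0 // ltr_pwDl.
rewrite /h (_ : L = a.+2) /=; last by lia.
by rewrite eqxx !b2RT b2RF; field; rewrite lt0r_neq0 // ltr_pwDl.
Qed.

End Cylinder.

Theorem mainTheorem1 (R : realFieldType) (L : nat) (hL : (2 <= L)%N)
    (al ar : R) (hal : 0 < al < 1) (har : 0 < ar < 1)
    (pi : config L -> R) (hpi : stationary (@alpha_cyl R L al ar) pi)
    (i : site L) :
  rho_a pi i = al + (ar - al) * ((val i.1).+1)%:R / (L.+1)%:R.
Proof.
have rho_harmonic := rho_a_mirror_harmonic hpi.
have profile_harmonic := linear_profile_mirror_harmonic al ar hL.
exact: (mirror_harmonic_unique rho_harmonic profile_harmonic i).
Qed.
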